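(* Let $N=\{1,\dots,n\}$ and let $F:2^N\to\mathbb{R}$ be quasi-submodular. Run the minimization procedure (described in the context) from $X_0=\emptyset$ and let $Q_+$ be its output, and from $X_0=N$ and let $S_+$ be its output. Then $Q_+$ and $S_+$ are both local minima of $F$.
   Context: For $A\subseteq N$ and $i\in N$, write $A+i=A\cup\{i\}$, $A-i=A\setminus\{i\}$, and $F(i\mid A)=F(A+i)-F(A)$. $F$ is quasi-submodular if for all $X,Y\subseteq N$ both hold: $F(X\cap Y)\ge F(X)\Rightarrow F(Y)\ge F(X\cup Y)$, and $F(X\cap Y)>F(X)\Rightarrow F(Y)>F(X\cup Y)$. A set $X\subseteq N$ is a local minimum of $F$ if $F(X-i)\ge F(X)$ for all $i\in X$ and $F(X+j)\ge F(X)$ for all $j\in N\setminus X$. Minimization procedure: given $X_0\subseteq N$, for $t=0,1,2,\dots$: let $U_t=\{u\in N\setminus X_t: F(u\mid X_t)<0\}$ and $Y_t=X_t\cup U_t$; let $D_t=\{d\in X_t: F(d\mid Y_t-d)>0\}$ and $X_{t+1}=Y_t\setminus D_t$; if $X_{t+1}=X_t$, stop and output $X_t$; otherwise continue with $t+1$. *)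

(* N = {1,...,n} is rendered as the finite type 'I_n,
   subsets of N as {set 'I_n}, and F : 2^N -> R with R a real field. *)
From HB Require Import structures.
From mathcomp Require Import all_boot all_order all_algebra.
Set Implicit Arguments. Unset Strict Implicit. Unset Printing Implicit Defensive.
Import Order.TTheory GRing.Theory Num.Theory.
Local Open Scope ring_scope.

Section Defs.
Variables (R : realFieldType) (n : nat).
Implicit Types (F : {set 'I_n} -> R) (A X Y : {set 'I_n}).

Definition Fmarg F (i : 'I_n) A : R := F (i |: A) - F A.

Definition quasi_submodular F : Prop :=
  forall X Y,
    (F (X :&: Y) >= F X -> F Y >= F (X :|: Y)) /\
    (F (X :&: Y) > F X -> F Y > F (X :|: Y)).

Definition local_min F X : Prop :=
  (forall i, i \in X -> F (X :\ i) >= F X) /\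
  (forall j, j \notin X -> F (j |: X) >= F X).

Definition Uset F X : {set 'I_n} := [set u | (u \notin X) && (Fmarg F u X < 0)].
Definition Yset F X : {set 'I_n} := X :|: Uset F X.
Definition Dset F X : {set 'I_n} :=
  [set d | (d \in X) && (Fmarg F d (Yset F X :\ d) > 0)].
Definition step F X : {set 'I_n} := Yset F X :\: Dset F X.

Definition iterate F X0 (t : nat) : {set 'I_n} := iter t (step F) X0.

(* The procedure started at X0 stops (at some t with X_{t+1} = X_t) and
   every stopping point's set (= the output, since the sequence is
   constant afterwards) satisfies P. *)
Definition output_satisfies F X0 (P : {set 'I_n} -> Prop) : Prop :=
  (exists t, step F (iterate F X0 t) = iterate F X0 t) /\
  (forall t, step F (iterate F X0 t) = iterate F X0 t ->
             (forall s, (s < t)%N -> step F (iterate F X0 s) != iterate F X0 s) ->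
             P (iterate F X0 t)).
End Defs.

(* Quasi-submodularity makes the sign of a marginal gain F(d | A) monotone in A:
   a negative gain stays negative on supersets of A, a positive one stays
   positive on subsets.  Started from the empty set, every element of X_t keeps
   a negative gain F(d | X_t - d); hence nothing is ever deleted, the X_t grow,
   and the invariant propagates.  Dually, from N every element outside X_t has
   a positive gain, nothing is ever added and the X_t shrink.  Either way the
   procedure stops, and a set fixed by one step is a local minimum. *)
From mathcomp Require Import all_boot all_order all_algebra.
Import Order.TTheory GRing.Theory Num.Theory.
Local Open Scope ring_scope.
Set Implicit Arguments. Unset Strict Implicit.

Lemma iter_fixpoint_measure (T : eqType) (f : T -> T) (P : T -> Prop)
    (m : T -> nat) (x : T) :
  (forall y, P y -> P (f y)) ->
  (forall y, P y -> f y != y -> (m (f y) < m y)%N) ->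
  P x -> exists t, f (iter t f x) = iter t f x.
Proof.
move=> Pf m_dec; elim: {x}(m x) {-2}x (leqnn (m x)) => [|k IHk] x mx Px;
  have [fx|nfx] := eqVneq (f x) x; try by exists 0%N.
- by move: (m_dec x Px nfx); rewrite ltnNge (leq_trans mx).
- have [|t ft] := IHk (f x) _ (Pf x Px).
    by rewrite -ltnS (leq_trans (m_dec x Px nfx)).
  by exists t.+1; rewrite iterSr.
Qed.

Lemma setU1I_subset (T : finType) (A B : {set T}) (d : T) :
  A \subset B -> d \notin B -> (d |: A) :&: B = A.
Proof.
move=> sAB dB; rewrite setIUl (setIidPl sAB).
by rewrite (_ : [set d] :&: B = set0) ?set0U //; apply/setP=> x; rewrite !inE;
  case: eqP => // ->; rewrite (negbTE dB).
Qed.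

Lemma setU1U_subset (T : finType) (A B : {set T}) (d : T) :
  A \subset B -> (d |: A) :|: B = d |: B.
Proof. by move=> sAB; rewrite -setUA (setUidPr sAB). Qed.

Section QuasiSubmodular.
Variables (R : realFieldType) (n : nat) (F : {set 'I_n} -> R).
Hypothesis qsF : quasi_submodular F.
Implicit Types (A B X : {set 'I_n}) (d : 'I_n).

Lemma Fmarg_lt0_subset A B d : A \subset B -> d \notin B ->
  Fmarg F d A < 0 -> Fmarg F d B < 0.
Proof.
move=> sAB dB; rewrite /Fmarg !subr_lt0.
by have := (qsF (d |: A) B).2; rewrite setU1I_subset // setU1U_subset.
Qed.

Lemma Fmarg_gt0_subset A B d : A \subset B -> d \notin B ->
  Fmarg F d B > 0 -> Fmarg F d A > 0.
Proof.
move=> sAB dB; rewrite !ltNge /Fmarg !subr_le0; apply: contra.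
by have := (qsF (d |: A) B).1; rewrite setU1I_subset // setU1U_subset.
Qed.

Lemma step_fixed_local_min X : step F X = X -> local_min F X.
Proof.
move=> fixX; have YX : Yset F X = X.
  apply/eqP; rewrite eqEsubset subsetUl andbT; apply/subsetP=> u uY.
  have [|uD] := boolP (u \in Dset F X); first by rewrite inE => /andP [].
  by rewrite -fixX inE uD uY.
split=> [i iX | j jX]; rewrite leNgt; apply/negP=> Fi.
- have iD : i \in Dset F X by rewrite inE iX YX /Fmarg setD1K // subr_gt0.
  by have := iX; rewrite -{1}fixX inE iD.
- have : j \in Yset F X by rewrite !inE jX /Fmarg subr_lt0 Fi orbT.
  by rewrite YX (negPf jX).
Qed.

Lemma step_fixed_output X0 : (exists t, step F (iterate F X0 t) = iterate F X0 t) ->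
  output_satisfies F X0 (local_min F).
Proof. by move=> fixed; split=> // t fix_t _; apply: step_fixed_local_min. Qed.

Definition elements_decrease X := forall d, d \in X -> Fmarg F d (X :\ d) < 0.

Definition nonelements_increase X := forall u, u \notin X -> Fmarg F u X > 0.

Lemma Fmarg_Yset_lt0 X d : elements_decrease X -> d \in Yset F X ->
  Fmarg F d (Yset F X :\ d) < 0.
Proof.
move=> decX; case/setUP=> [dX | ].
  by apply: Fmarg_lt0_subset (decX d dX); rewrite ?setD11 ?setSD ?subsetUl.
rewrite inE => /andP [dX Fd]; apply: Fmarg_lt0_subset Fd; rewrite ?setD11 //.
by apply/subsetP=> x xX; rewrite !inE xX orTb andbT; apply: contraNneq dX => <-.
Qed.

Lemma step_elements_decrease X : elements_decrease X -> step F X = Yset F X.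
Proof.
move=> decX; rewrite /step (_ : Dset F X = set0) ?setD0 //.
apply/setP=> d; rewrite inE in_set0; apply/andP=> [[dX]].
by rewrite ltNge ltW // Fmarg_Yset_lt0 // inE dX.
Qed.

Lemma elements_decrease_step X : elements_decrease X -> elements_decrease (step F X).
Proof.
by move=> decX; rewrite step_elements_decrease // => d; apply: Fmarg_Yset_lt0.
Qed.

Lemma Yset_nonelements_increase X : nonelements_increase X -> Yset F X = X.
Proof.
move=> incX; apply/setUidPl/subsetP=> u; rewrite inE => /andP [uX].
by rewrite ltNge ltW ?incX.
Qed.

Lemma nonelements_increase_step X :
  nonelements_increase X -> nonelements_increase (step F X).
Proof.
move=> incX u; have YX := Yset_nonelements_increase incX.
rewrite /step YX inE negb_and negbK => /orP [uD | uX]; last first.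
  by apply: Fmarg_gt0_subset (incX u uX); rewrite ?subsetDl.
move: (uD); rewrite inE YX => /andP [uX Fu].
have sub : X :\: Dset F X \subset X :\ u.
  apply/subsetP=> x; rewrite !inE YX => /andP [xD ->]; rewrite andbT.
  by apply: contraNneq xD => ->; rewrite uX Fu.
by apply: Fmarg_gt0_subset sub _ Fu; rewrite !inE eqxx.
Qed.

End QuasiSubmodular.

Theorem lemma4 (R : realFieldType) (n : nat) (F : {set 'I_n} -> R) :
  quasi_submodular F ->
  output_satisfies F set0 (local_min F) /\
  output_satisfies F [set: 'I_n] (local_min F).
Proof.
move=> qsF; split; apply: step_fixed_output.
- apply: (iter_fixpoint_measure (P := elements_decrease F) (m := fun X => #|~: X|)).
  + exact: elements_decrease_step.
  + move=> X decX nfix; apply: proper_card; rewrite properC properEneq eq_sym nfix.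
    by rewrite step_elements_decrease // subsetUl.
  + by move=> d; rewrite inE.
- apply: (iter_fixpoint_measure (P := nonelements_increase F) (m := fun X => #|X|)).
  + exact: nonelements_increase_step.
  + move=> X incX nfix; apply: proper_card; rewrite properEneq nfix.
    by rewrite /step Yset_nonelements_increase // subsetDl.
  + by move=> u; rewrite inE.
Qed.
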